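(* Let $T$ be a complete first order theory, $\varphi(x,\bar y)\in\mathbb{L}(\tau_T)$, $M\models T$, $I$ a set, and $\bar b_t\in{}^{\ell g(\bar y)}M$ for $t\in I$ such that $\langle\varphi(x,\bar b_t):t\in I\rangle$ is an independent sequence of formulas in $M$. Let $\mathbb B^c_I$ be the completion of the Boolean algebra freely generated by $\langle e_t:t\in I\rangle$. Then there is a function $F:{}^{\ell g(\bar y)}M\to\mathbb B^c_I$ such that: ($\alpha$) $F(\bar b_t)=e_t$ for all $t\in I$; ($\beta$) for every ultrafilter $D$ of $\mathbb B^c_I$ there is a unique $p=p_D\in\mathbf S_\varphi(M)$ such that for every $\bar b\in{}^{\ell g(\bar y)}M$ we have $\varphi(x,\bar b)\in p\iff F(\bar b)\in D$.
   Context: $\langle\varphi(x,\bar b_t):t\in I\rangle$ is independent in $M$ means: for all disjoint finite $s_1,s_2\subseteq I$ there is $a\in M$ with $M\models\varphi[a,\bar b_t]$ for $t\in s_1$ and $M\models\neg\varphi[a,\bar b_t]$ for $t\in s_2$. $\mathbf S_\varphi(M)$ is the set of complete $\varphi$-types over $M$: maximal sets of formulas of the form $\varphi(x,\bar b)$ or $\neg\varphi(x,\bar b)$ with $\bar b\in{}^{\ell g(\bar y)}M$ which are consistent with the elementary diagram of $M$. *)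

From HB Require Import structures.
From mathcomp Require Import all_boot all_order.
From Stdlib Require List.
Set Implicit Arguments. Unset Strict Implicit. Unset Printing Implicit Defensive.
Import Order.TTheory.
Local Open Scope order_scope.

(* Model-theoretic side.  The structure M is represented by its carrier
   type M; the formula phi(x, y_1..y_n) is represented by its
   interpretation in M, a relation  phi : M -> n.-tuple M -> Prop.                                            *)

Definition independent_in (M I : Type) (n : nat)
  (phi : M -> n.-tuple M -> Prop) (b : I -> n.-tuple M) : Prop :=
  forall s1 s2 : seq I,
    (forall t, List.In t s1 -> ~ List.In t s2) ->
    exists a : M, (forall t, List.In t s1 -> phi a (b t)) /\
                  (forall t, List.In t s2 -> ~ phi a (b t)).

(* A phi-formula with parameters: (true, bb) stands for phi(x, bb),
   (false, bb) stands for ~ phi(x, bb). *)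
Definition phi_formula (M : Type) (n : nat) := (bool * n.-tuple M)%type.

Definition satisfies (M : Type) (n : nat) (phi : M -> n.-tuple M -> Prop)
  (a : M) (f : phi_formula M n) : Prop :=
  if f.1 then phi a f.2 else ~ phi a f.2.

(* A set of phi-formulas over M is consistent with the elementary diagram
   of M iff it is finitely satisfiable in M. *)
Definition phi_consistent (M : Type) (n : nat) (phi : M -> n.-tuple M -> Prop)
  (p : phi_formula M n -> Prop) : Prop :=
  forall l : seq (phi_formula M n), (forall f, List.In f l -> p f) ->
    exists a : M, forall f, List.In f l -> satisfies phi a f.

Definition in_S_phi (M : Type) (n : nat) (phi : M -> n.-tuple M -> Prop)
  (p : phi_formula M n -> Prop) : Prop :=
  phi_consistent phi p /\
  forall q : phi_formula M n -> Prop,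
    phi_consistent phi q -> (forall f, p f -> q f) -> forall f, q f -> p f.

(* Boolean-algebra side: Boolean algebras are ctbDistrLatticeType's.  *)

Section BA.
Context {d : Order.disp_t} {B : ctbDistrLatticeType d}.

Definition complete_BA : Prop :=
  forall S : B -> Prop, exists s : B,
    (forall x, S x -> x <= s) /\
    (forall u, (forall x, S x -> x <= u) -> s <= u).

Inductive gen_subalg (I : Type) (e : I -> B) : B -> Prop :=
  | gen_base t : gen_subalg e (e t)
  | gen_top : gen_subalg e \top
  | gen_meet x y : gen_subalg e x -> gen_subalg e y -> gen_subalg e (x `&` y)
  | gen_compl x : gen_subalg e x -> gen_subalg e (~` x).

Definition freely_generates (I : Type) (e : I -> B) : Prop :=
  forall (d' : Order.disp_t) (A : ctbDistrLatticeType d') (f : I -> A),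
  exists h : B -> A,
    (forall t, h (e t) = f t) /\
    (forall x y, gen_subalg e x -> gen_subalg e y -> h (x `&` y) = h x `&` h y) /\
    (forall x, gen_subalg e x -> h (~` x) = ~` h x).

Definition dense_in (S : B -> Prop) : Prop :=
  forall y : B, y <> \bot -> exists x, S x /\ x <> \bot /\ x <= y.

(* (B, e) is (a copy of) the completion B^c_I of the Boolean algebra
   freely generated by <e_t : t in I> *)
Definition completion_of_free (I : Type) (e : I -> B) : Prop :=
  complete_BA /\ freely_generates e /\ dense_in (gen_subalg e).

Definition is_filter (D : B -> Prop) : Prop :=
  D \top /\ (forall x y, D x -> x <= y -> D y) /\
  (forall x y, D x -> D y -> D (x `&` y)).

Definition is_ultrafilter (D : B -> Prop) : Prop :=
  is_filter D /\ ~ D \bot /\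
  forall D', is_filter D' -> ~ D' \bot -> (forall x, D x -> D' x) ->
    forall x, D' x -> D x.

End BA.

(* Send each parameter tuple [bb] to a value in [B] so that the literals
   [phi(x, bb)] and [~ phi(x, bb)], valued by [F bb] and its complement, respect
   unsatisfiability: finitely many literals with no common solution in [M] have
   meet [\bot]. Independence says exactly that [b t |-> e t] does, Zorn's lemma
   gives a maximal such partial map extending it, and completeness of [B] makes
   it total: a new [bb] goes to the supremum of the meets of the finite families
   entailing [phi(x, bb)]. Given an ultrafilter [D], the literals whose value lies in [D] are
   then finitely satisfiable and decide every [phi(x, bb)], so they form a
   phi-type, and a phi-type is determined by its positive part. *)

From HB Require Import structures.
From mathcomp Require Import all_boot all_order.
From mathcomp Require Import boolp classical_sets.
From Stdlib Require List.
Set Implicit Arguments. Unset Strict Implicit.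
Import Order.Theory.
Local Open Scope order_scope.

Lemma In_split_off (T : Type) (P : T -> Prop) (x : T) (l : seq T) :
  (forall y, List.In y l -> P y \/ y = x) ->
  exists2 l0, (forall y, List.In y l0 -> P y /\ List.In y l) &
    forall y, List.In y l -> List.In y l0 \/ y = x.
Proof.
elim: l => [|y l IH] Hl; first by exists [::].
have [l0 Hl0 Hl0'] := IH (fun z hz => Hl z (or_intror hz)).
case: (Hl y (or_introl erefl)) => [Py|->].
  exists (y :: l0) => [z /= [<-|/Hl0 [Pz hz]]|z /= [<-|/Hl0' [hz|->]]].
  - by split=> //; left.
  - by split=> //; right.
  - by left; left.
  - by left; right.
  - by right.
exists l0 => [z /Hl0 [Pz hz]|z /= [<-|/Hl0' //]]; last by right.
by split=> //; right.
Qed.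

Section BooleanAlgebra.
Context {d : Order.disp_t} {B : ctbDistrLatticeType d}.
Implicit Types (x y : B) (D : B -> Prop).

Definition signed (eps : bool) x : B := if eps then x else ~` x.

Lemma signed_negb eps x : signed (~~ eps) x = ~` signed eps x.
Proof. by case: eps; rewrite /= ?complK. Qed.

Lemma meet_signed_negb eps x : signed eps x `&` signed (~~ eps) x = \bot.
Proof. by rewrite signed_negb meetxC. Qed.

Lemma meets_le_In (T : Type) (r : seq T) (F : T -> B) i :
  List.In i r -> \meet_(j <- r) F j <= F i.
Proof.
elim: r => [//|j r IH] /= [->|/IH]; rewrite big_cons; first exact: leIl.
by apply: le_trans; exact: leIr.
Qed.

Lemma meets_le_sub (T : Type) (r r' : seq T) (F : T -> B) :
  (forall i, List.In i r' -> List.In i r) ->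
  \meet_(i <- r) F i <= \meet_(i <- r') F i.
Proof.
elim: r' => [|j r' IH] sub; first by rewrite big_nil lex1.
rewrite big_cons lexI meets_le_In; last by apply: sub; left.
by rewrite IH // => i hi; apply: sub; right.
Qed.

Lemma filter_meets D (T : Type) (r : seq T) (F : T -> B) :
  is_filter D -> (forall i, List.In i r -> D (F i)) -> D (\meet_(i <- r) F i).
Proof.
move=> [Dtop [_ DI]]; elim: r => [|j r IH] Dr; first by rewrite big_nil.
rewrite big_cons; apply: DI; first by apply: Dr; left.
by apply: IH => i hi; apply: Dr; right.
Qed.

(* The filter generated by [D] and [x] is proper unless [D] contains [~` x]. *)
Lemma ultrafilterC D x : is_ultrafilter D -> D (~` x) <-> ~ D x.
Proof.
move=> [[Dtop [Dup DI]] [Dbot Dmax]]; split=> [Dnx Dx|nDx].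
  by apply: Dbot; rewrite -(meetxC x); exact: DI.
apply: contra_notP nDx => nDnx.
pose D' y := exists2 c, D c & x `&` c <= y.
have D'filter : is_filter D'.
  split; first by exists \top.
  split=> [u v [c Dc cu] uv|u v [c Dc cu] [c' Dc' cv]].
    by exists c; last exact: le_trans uv.
  exists (c `&` c'); first exact: DI.
  by rewrite lexI (le_trans _ cu) ?(le_trans _ cv) // leI2 // ?leIl ?leIr.
apply: (Dmax D' D'filter); last by exists \top; rewrite ?meetx1.
- move=> [c Dc]; rewrite le_eqVlt ltx0 orbF => /eqP xc0; apply: nDnx.
  by apply: (Dup c) => //; rewrite -disj_leC meetC xc0.
- by move=> y Dy; exists y => //; exact: leIr.
Qed.

End BooleanAlgebra.

Section PhiTypes.
Variables (M : Type) (n : nat) (phi : M -> n.-tuple M -> Prop).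
Implicit Types (p q : phi_formula M n -> Prop) (f : phi_formula M n).

Definition negf f : phi_formula M n := (~~ f.1, f.2).

Lemma satisfies_negf a f : satisfies phi a (negf f) <-> ~ satisfies phi a f.
Proof. by case: f => [[] bb]; rewrite /satisfies //= not_notP. Qed.

Lemma phi_consistent_negf q f : phi_consistent phi q -> q f -> ~ q (negf f).
Proof.
move=> qcons qf qnf.
have [a Ha] : exists a, forall g, List.In g [:: f; negf f] -> satisfies phi a g.
  by apply: qcons => g [<-|[<-|[]]].
exact: (satisfies_negf a f).1 (Ha _ (or_intror (or_introl erefl))) (Ha _ (or_introl erefl)).
Qed.

Lemma S_phi_refutes p f : in_S_phi phi p -> ~ p f ->
  exists2 l, (forall g, List.In g l -> p g) &
    forall a, (forall g, List.In g l -> satisfies phi a g) -> ~ satisfies phi a f.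
Proof.
move=> [pcons pmax] npf.
have : ~ phi_consistent phi (fun g => p g \/ g = f).
  by move=> c; apply: npf; apply: (pmax _ c) => [g|]; [left|right].
move=> /existsNP [l /not_implyP [lpf /forallNP unsat]].
have [l0 l0p ll0] := In_split_off lpf.
exists l0 => [g /l0p []//|a sat0 satf]; apply: (unsat a) => g /ll0 [/sat0|->] //.
Qed.

Lemma S_phi_total p f : in_S_phi phi p -> p f \/ p (negf f).
Proof.
move=> Sp; apply: contrapT => /not_orP[npf npnf].
have [l0 l0p ref0] := S_phi_refutes Sp npf.
have [l1 l1p ref1] := S_phi_refutes Sp npnf.
have [a Ha] : exists a, forall g, List.In g (l0 ++ l1) -> satisfies phi a g.
  by apply: Sp.1 => g /(List.in_app_or l0) [/l0p|/l1p].
have sat0 g (hg : List.In g l0) : satisfies phi a g by apply: Ha; apply: List.in_or_app; left.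
have sat1 g (hg : List.In g l1) : satisfies phi a g by apply: Ha; apply: List.in_or_app; right.
by apply: (ref1 a sat1); apply/satisfies_negf; exact: ref0.
Qed.

Lemma S_phi_negf p f : in_S_phi phi p -> p (negf f) <-> ~ p f.
Proof.
move=> Sp; split=> [pnf pf|npf]; first exact: phi_consistent_negf Sp.1 pf pnf.
by case: (S_phi_total f Sp).
Qed.

Lemma S_phi_ext p q : in_S_phi phi p -> in_S_phi phi q ->
  (forall bb, p (true, bb) <-> q (true, bb)) -> p = q.
Proof.
move=> Sp Sq pq; apply: funext => -[[] bb]; apply: propext; first exact: pq.
by rewrite -[(false, bb)]/(negf (true, bb)) (S_phi_negf _ Sp) (S_phi_negf _ Sq) pq.
Qed.

End PhiTypes.

Section Extension.
Variables (M : Type) (n : nat) (phi : M -> n.-tuple M -> Prop).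
Variables (d : Order.disp_t) (B : ctbDistrLatticeType d).

(* [((eps, bb), y)] is the literal [phi(x, bb)] (negated if [~~ eps]) with
   value [signed eps y]; a set [S] of pairs [(bb, y)] is read as a partial map. *)
Definition literal := (phi_formula M n * B)%type.
Implicit Types (l : seq literal) (S : set (n.-tuple M * B)).

Definition sat_lits (a : M) l := forall g, List.In g l -> satisfies phi a g.1.

Definition meet_lits l : B := \meet_(g <- l) signed g.1.1 g.2.

Definition lits_in S l := forall g, List.In g l -> S (g.1.2, g.2).

Definition respects_unsat S :=
  forall l, lits_in S l -> (forall a, ~ sat_lits a l) -> meet_lits l = \bot.

Lemma respects_unsat_sub S S' :
  respects_unsat S -> (S' `<=` S)%classic -> respects_unsat S'.
Proof. by move=> RS S'S l lS'; apply: RS => g /lS' /S'S. Qed.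

Lemma meet_lits_cat l1 l2 : meet_lits (l1 ++ l2) = meet_lits l1 `&` meet_lits l2.
Proof. exact: big_cat. Qed.

Lemma respects_unsat_entails S l g : respects_unsat S -> lits_in S l ->
  S (g.1.2, g.2) -> (forall a, sat_lits a l -> satisfies phi a g.1) ->
  meet_lits l <= signed g.1.1 g.2.
Proof.
move=> RS lS gS lg; rewrite -[signed _ _]complK -signed_negb -disj_leC.
have -> : signed (~~ g.1.1) g.2 = meet_lits [:: (negf g.1, g.2)].
  by rewrite /meet_lits big_seq1.
rewrite -meet_lits_cat RS //.
  by move=> h /(List.in_app_or l) [/lS|[<-|[]]].
move=> a sat; have satl : sat_lits a l.
  by move=> h hl; apply: sat; apply: List.in_or_app; left.
have : List.In (negf g.1, g.2) (l ++ [:: (negf g.1, g.2)]).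
  by apply: List.in_or_app; right; left.
by move/sat/satisfies_negf; apply; exact: lg.
Qed.

Lemma respects_unsat_functional S bb y z :
  respects_unsat S -> S (bb, y) -> S (bb, z) -> y = z.
Proof.
move=> RS Sy Sz.
suff le_yz y' z' : S (bb, y') -> S (bb, z') -> y' <= z'.
  by apply/le_anti; rewrite !le_yz.
move=> Sy' Sz'; have := @respects_unsat_entails S [:: ((true, bb), y')] ((true, bb), z').
rewrite /meet_lits big_seq1; apply=> // [g [<-|[]]//|a sat].
exact: sat _ (or_introl erefl).
Qed.

Definition compatible S (bb : n.-tuple M) (y : B) :=
  forall eps l, lits_in S l -> (forall a, sat_lits a l -> satisfies phi a (eps, bb)) ->
    meet_lits l <= signed eps y.

Lemma respects_unsat_setU1 S bb y : respects_unsat S -> compatible S bb y ->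
  respects_unsat (S `|` [set (bb, y)])%classic.
Proof.
move=> RS Sy l lSy unsat.
have [[eps epsl]|noz] := pselect (exists eps, List.In ((eps, bb), y) l); last first.
  apply: RS unsat => -[[eps bb'] y'] hg; case: (lSy _ hg) => // -[/= eb ey].
  by case: noz; exists eps; rewrite -eb -ey.
have le_eps : meet_lits l <= signed eps y := meets_le_In _ epsl.
apply/le_anti; rewrite le0x andbT -(meet_signed_negb eps y) lexI le_eps /=.
have [nepsl|nnepsl] := pselect (List.In ((~~ eps, bb), y) l).
  exact: meets_le_In nepsl.
have only_eps g : List.In g l -> S (g.1.2, g.2) \/ g = ((eps, bb), y).
  move: g => [[e' bb'] y'] hg; case: (lSy _ hg) => [Sg|[/= eb ey]]; first by left.
  right; rewrite eb ey in hg *.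
  by case: e' eps hg nnepsl {le_eps epsl} => [] [] // hg /(_ hg).
have [l0 l0S ll0] := In_split_off only_eps.
have entail a : sat_lits a l0 -> satisfies phi a (~~ eps, bb).
  move=> sat0; apply: (satisfies_negf phi a (eps, bb)).2 => sateps.
  by apply: (unsat a) => g /ll0 [/sat0|->].
apply: le_trans (Sy (~~ eps) l0 (fun g h => (l0S g h).1) entail).
exact: meets_le_sub (fun g h => (l0S g h).2).
Qed.

Lemma compatible_sup S bb : @complete_BA d B -> respects_unsat S ->
  exists y, compatible S bb y.
Proof.
move=> complB RS.
have [y [yub ylub]] := complB (fun x => exists2 l,
  lits_in S l /\ (forall a, sat_lits a l -> phi a bb) & x = meet_lits l).
exists y => -[] l lS entl; first by apply: yub; exists l.
rewrite /= lexC; apply: ylub => _ [l' [l'S entl'] ->].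
rewrite -disj_leC -meet_lits_cat; apply/eqP/RS.
  by move=> g /(List.in_app_or l') [/l'S|/lS].
move=> a sat; apply: (entl a) (entl' a _) => g hg; apply: sat; apply: List.in_or_app.
  by right.
by left.
Qed.

Lemma lits_in_chain (F : set (set (n.-tuple M * B))) S0 l :
  total_on F subset -> lits_in (\bigcup_(X in F) X `|` S0)%classic l ->
  lits_in S0 l \/ exists2 X, F X & lits_in (X `|` S0)%classic l.
Proof.
move=> tot; elim: l => [|g l IH] gl; first by left.
have [l0|[X FX lX]] := IH (fun h hl => gl h (or_intror hl)).
  case: (gl g (or_introl erefl)) => [[Y FY Yg]|S0g].
    by right; exists Y => // h /= [<-|/l0]; [left|right].
  by left => h /= [<-|/l0].
case: (gl g (or_introl erefl)) => [[Y FY Yg]|S0g]; last first.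
  by right; exists X => // h /= [<-|/lX]; [right|].
have [XY|YX] := tot X Y FX FY.
  right; exists Y => // h /= [<-|/lX [/XY|]]; by [left|left|right].
by right; exists X => // h /= [<-|/lX]; [left; apply: YX|].
Qed.

Lemma respects_unsat_chain (F : set (set (n.-tuple M * B))) S0 :
  respects_unsat S0 -> (forall X, F X -> respects_unsat (X `|` S0)%classic) ->
  total_on F subset -> respects_unsat (\bigcup_(X in F) X `|` S0)%classic.
Proof.
move=> RS0 RF tot l /(lits_in_chain tot) [lS0|[X /RF RX lX]]; [exact: RS0|exact: RX].
Qed.

Lemma respects_unsat_range I (b : I -> n.-tuple M) (e : I -> B) :
  independent_in phi b -> respects_unsat (range (fun t => (b t, e t))).
Proof.
move=> ind l lR unsat.
have [ts lE] : exists ts : seq (bool * I), l = List.map (fun u => ((u.1, b u.2), e u.2)) ts.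
  elim: l lR {unsat} => [|g l IH] lR; first by exists [::].
  have [ts ->] := IH (fun h hl => lR h (or_intror hl)).
  have [t _ [gb ge]] := lR g (or_introl erefl).
  by move: g gb ge {lR} => [[eps bb] y] /= <- <-; exists ((eps, t) :: ts).
subst l.
pose s eps := List.map snd (List.filter (fun u => u.1 == eps) ts).
have s_In eps t : List.In t (s eps) <-> List.In (eps, t) ts.
  rewrite /s List.in_map_iff; split=> [[[e' t'] [/= <-]]|hu].
    by move=> /(List.filter_In _ _ ts) [hu /eqP <-].
  by exists (eps, t); split=> //; apply/(List.filter_In _ _ ts); rewrite /= eqxx.
have [t t1 t0] : exists2 t, List.In (true, t) ts & List.In (false, t) ts.
  apply: contrapT => disj.
  have [a [sat1 sat0]] := ind (s true) (s false)
    (fun t h1 h0 => disj (ex_intro2 _ _ t ((s_In _ _).1 h1) ((s_In _ _).1 h0))).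
  apply: (unsat a) => g hg; have [[eps t] [<- /s_In hu]] := (List.in_map_iff _ _ _).1 hg.
  by case: eps hu {hg} => hu; [exact: sat1|exact: sat0].
apply/le_anti; rewrite le0x andbT -(meet_signed_negb true (e t)) lexI.
by apply/andP; split; [exact: meets_le_In (List.in_map _ _ _ t1)|
  exact: meets_le_In (List.in_map _ _ _ t0)].
Qed.

Lemma respects_unsat_extension I (b : I -> n.-tuple M) (e : I -> B) :
  @complete_BA d B -> respects_unsat (range (fun t => (b t, e t))) ->
  exists F : n.-tuple M -> B,
    (forall t, F (b t) = e t) /\ respects_unsat [set z | z.2 = F z.1]%classic.
Proof.
set R0 := range _ => complB RR0.
have [A [RA Amax]] := Zorn_bigcup (fun F FP tot => respects_unsat_chain RR0 FP tot).
have Atotal bb : exists y, (A `|` R0)%classic (bb, y).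
  have [y compat] := compatible_sup bb complB RA.
  exists y; apply: contrapT => ny; apply: (Amax (A `|` [set (bb, y)])%classic).
    by split=> [|sub]; [exact: subsetUl|apply: ny; left; apply: sub; right].
  apply: respects_unsat_sub (respects_unsat_setU1 RA compat) _.
  by move=> z [[Az|->]|R0z]; [left; left|right|left; right].
have [F HF] := choice Atotal.
exists F; split; last by apply: respects_unsat_sub RA _ => -[bb y] /= ->; exact: HF.
by move=> t; apply: respects_unsat_functional RA (HF _) _; right; exists t.
Qed.

Lemma ultrafilter_S_phi (F : n.-tuple M -> B) (D : B -> Prop) :
  respects_unsat [set z | z.2 = F z.1]%classic -> is_ultrafilter D ->
  in_S_phi phi (fun f => D (signed f.1 (F f.2))).
Proof.
move=> RF UD; split=> [l lp|q qcons pq f qf].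
  apply: contrapT => /forallNP unsat; apply: UD.2.1.
  have <- : meet_lits (List.map (fun f => (f, F f.2)) l) = \bot.
    apply: RF => [g /List.in_map_iff [f [<-]] //|a sat].
    apply: (unsat a) => f hf; exact: sat _ (List.in_map _ _ _ hf).
  apply: filter_meets UD.1 _ => g /List.in_map_iff [f [<- /lp]] //.
apply: contrapT => npf; apply: phi_consistent_negf qcons qf (pq _ _).
by rewrite /= signed_negb; apply/(ultrafilterC _ UD).
Qed.

End Extension.

Theorem claim2p3 (M I : Type) (n : nat) (phi : M -> n.-tuple M -> Prop)
  (b : I -> n.-tuple M) (Hind : independent_in phi b)
  (d : Order.disp_t) (B : ctbDistrLatticeType d) (e : I -> B)
  (HB : completion_of_free e) :
  exists F : n.-tuple M -> B,
    (forall t, F (b t) = e t) /\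
    (forall D : B -> Prop, is_ultrafilter D ->
       exists! p : phi_formula M n -> Prop,
         in_S_phi phi p /\ (forall bb : n.-tuple M, p (true, bb) <-> D (F bb))).
Proof.
have [complB _] := HB.
have [F [Fb RF]] := respects_unsat_extension complB (respects_unsat_range (e := e) Hind).
exists F; split=> // D UD.
have Sp := ultrafilter_S_phi RF UD.
exists (fun f => D (signed f.1 (F f.2))); split=> // q [Sq qF].
by apply: S_phi_ext Sp Sq _ => bb; rewrite qF.
Qed.
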